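(* Let $G=H\times K$ with $H$ and $K$ nontrivial finite groups. Then $$\mathcal{D}(G)\ge (\mathcal{D}(H)+2)(\mathcal{D}(K)+2)-2,$$ with equality if and only if $H$ and $K$ are both nilpotent and $\gcd(|H|,|K|)=1$.
   Context: $\mathcal{D}(X)$ denotes the number of conjugacy classes of nontrivial subgroups $Y$ of the finite group $X$ with $N_X(Y)\neq Y$. *)

From mathcomp Require Import all_boot all_fingroup all_solvable.
Set Implicit Arguments. Unset Strict Implicit. Unset Printing Implicit Defensive.
Local Open Scope group_scope.

Definition nsn_subgroups (gT : finGroupType) (G : {set gT}) : {set {set gT}} :=
  [set Y : {set gT} | [&& group_set Y, Y \subset G, Y != 1 & 'N_G(Y) != Y]].

Definition D (gT : finGroupType) (G : {set gT}) : nat :=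
  #|[set Y :^: G | Y in nsn_subgroups G]|.

From mathcomp Require Import all_boot all_fingroup all_solvable zify.
Set Implicit Arguments. Unset Strict Implicit. Unset Printing Implicit Defensive.
Local Open Scope group_scope.

(* Let G = H \x K.  For A <= H and B <= K the G-class of A * B determines the
   H-class of A and the K-class of B (intersect with H and K), and
   N_G(A * B) = N_H(A) * N_K(B), so A * B is self-normalizing in G only when A
   and B are.  Counting the classes of 1 and of the whole group along with those
   counted by D, the pairs of classes for H and K thus inject into the classes
   for G, whence (D H + 2) (D K + 2) <= D G + 2.  Equality means that each such
   Y <= G is (Y :&: H) * (Y :&: K) with Y :&: H and Y :&: K again of that kind.
   If H is not nilpotent, the normalizer M of a non-normal Sylow subgroup is
   self-normalizing in H (Frattini argument) but normalized by K; if p divides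
   #|H| and #|K|, the diagonal <[x * y]> with #[x] = #[y] = p meets H and K
   trivially.  Conversely, proper subgroups of nilpotent groups are never
   self-normalizing, and coprime orders make every subgroup of G split. *)

Section SelfNormalizing.
Variable gT : finGroupType.
Implicit Types L P : {group gT}.

Lemma Sylow_normal_nilpotent L : (forall P, Sylow L P -> P <| L) -> nilpotent L.
Proof.
move=> nsylL; apply: nilpotentS (Fitting_nil L).
rewrite -{1}(Sylow_gen L) gen_subG; apply/bigcupsP => P sylP.
apply: Fitting_max (nsylL P sylP) _.
by case/SylowP: sylP => p _ /pHall_pgroup/pgroup_nil.
Qed.

Lemma subnorm_Sylow_selfnorm p L P : p.-Sylow(L) P -> 'N_L('N_L(P)) = 'N_L(P).
Proof.
move=> sylP; set M := 'N_L(P).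
have sPM : P \subset M by rewrite subsetI (pHall_sub sylP) normG.
have sylPM : p.-Sylow(M) P := pHall_subl sPM (subsetIl _ _) sylP.
have nsMN : M <| 'N_L(M) by rewrite normal_subnorm subsetIl.
apply/eqP; rewrite eqEsubset subsetI subsetIl normG andbT.
by rewrite -{1}(Frattini_arg nsMN sylPM) mul_subG // setSI // subsetIl.
Qed.

Lemma non_nilpotent_selfnorm L :
  ~~ nilpotent L -> exists2 M : {group gT}, M \proper L & 'N_L(M) = M.
Proof.
move=> nnilL.
pose nonnormal_Sylow := [pred P : {group gT} | Sylow L P && ~~ (P <| L)].
have [P /andP[sylP nnP] | nsylL] := pickP nonnormal_Sylow.
  case/SylowP: sylP => p _ sylP; exists 'N_L(P)%G.
    rewrite properEneq subsetIl andbT; apply: contra nnP => /eqP eNL.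
    by rewrite /normal (pHall_sub sylP) -eNL subsetIr.
  exact: subnorm_Sylow_selfnorm sylP.
case/negP: nnilL; apply: Sylow_normal_nilpotent => P sylP.
by have := nsylL P; rewrite /= sylP => /negbFE.
Qed.

End SelfNormalizing.

Section NonSelfNormalizingSubgroups.
Variable gT : finGroupType.
Implicit Types (A : {set gT}) (L : {group gT}).

Definition nsn_ext L : {set {set gT}} := 1 |: ((L : {set gT}) |: nsn_subgroups L).

Definition classes_of L (S : {set {set gT}}) := [set A :^: L | A in S].

Lemma mem_nsn_ext L A : L :!=: 1 ->
  (A \in nsn_ext L) = [&& group_set A, A \subset L & (A == L) || ('N_L(A) != A)].
Proof.
move=> ntL; rewrite !inE.
have [-> | _] := eqVneq A 1.
  by rewrite group_set_one sub1G norm1 setIT eq_sym ntL orbT.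
by have [-> | //] := eqVneq A L; rewrite groupP subxx.
Qed.

Lemma nsn_extJ L A x : L :!=: 1 -> x \in L -> A \in nsn_ext L -> A :^ x \in nsn_ext L.
Proof.
move=> ntL xL; rewrite !mem_nsn_ext // => /and3P[gA sAL nsnA].
rewrite (groupP (Group gA :^ x)%G) -(conjGid xL) conjSg sAL normJ -conjIg.
by rewrite !(inj_eq (@conjsg_inj _ x)).
Qed.

Lemma nsn_ext_group L A :
  A \in nsn_ext L -> exists2 B : {group gT}, A = B & B \subset L.
Proof.
rewrite !inE => /or3P[/eqP-> | /eqP-> | /and4P[gA sAL _ _]].
- by exists 1%G; rewrite ?sub1G.
- by exists L.
- by exists (Group gA).
Qed.

Lemma card_classes_nsn_ext L :
  L :!=: 1 -> #|classes_of L (nsn_ext L)| = (D L + 2)%N.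
Proof.
move=> ntL; rewrite /classes_of !imsetU1 !cardsU1 in_setU1 negb_or.
have memJ A : A \in A :^: L := orbit_refl 'Js L A.
have class1 A : A \in 1 :^: L -> A = 1 by case/imsetP => x _ ->; rewrite conjs1g.
have classL A : A \in L :^: L -> A = L by case/imsetP => x xL ->; rewrite conjGid.
have notin_classes A : {in A :^: L, forall B, B \notin nsn_subgroups L} ->
    A :^: L \notin classes_of L (nsn_subgroups L).
  move=> nsnAL; apply/imsetP => -[B nsnB eAB].
  have /nsnAL : B \in A :^: L by rewrite eAB memJ.
  by rewrite nsnB.
have neq1L : 1 :^: L != L :^: L.
  apply: contra ntL => /eqP e1L.
  by have /class1-> : (L : {set gT}) \in 1 :^: L by rewrite e1L memJ.
rewrite neq1L !notin_classes => [|B|B].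
- by rewrite /= !add1n addn2.
- by move=> /classL->; rewrite inE (setIidPl (normG L)) eqxx !andbF.
- by move=> /class1->; rewrite inE eqxx /= !andbF.
Qed.

Lemma nilpotent_nsn_ext L (A : {group gT}) :
  nilpotent L -> L :!=: 1 -> A \subset L -> (A : {set gT}) \in nsn_ext L.
Proof.
move=> nilL ntL sAL; rewrite mem_nsn_ext // groupP sAL /=.
have [-> // | neAL] := eqVneq (A : {set gT}) L.
have /(nilpotent_proper_norm nilL) : A \proper L by rewrite properEneq neAL.
by rewrite properEneq eq_sym => /andP[->].
Qed.

End NonSelfNormalizingSubgroups.

Definition mul_classes (gT : finGroupType) (X Y : {set {set gT}}) :=
  [set A * B | A in X, B in Y].

Section DirectProductSubgroups.
Variables (gT : finGroupType) (G H K : {group gT}).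
Hypothesis defG : H \x K = G.
Implicit Types A B : {set gT}.

Let mulHK : H * K = G. Proof. by case/dprodP: defG. Qed.
Let cHK : H \subset 'C(K). Proof. by case/dprodP: defG; rewrite centsC. Qed.
Let tiHK : H :&: K = 1. Proof. by case/dprodP: defG. Qed.
Let sHG : H \subset G. Proof. by rewrite -mulHK mulg_subl. Qed.
Let sKG : K \subset G. Proof. by rewrite -mulHK mulg_subr. Qed.
Let subH_normK A : A \subset H -> K \subset 'N(A).
Proof. by move=> sAH; rewrite cents_norm // centsC (subset_trans sAH). Qed.
Let subK_normH B : B \subset K -> H \subset 'N(B).
Proof. by move=> sBK; rewrite cents_norm // (subset_trans cHK) ?centS. Qed.

Lemma dprod_conjsM A B h k : A \subset H -> B \subset K -> h \in H -> k \in K ->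
  (A * B) :^ (h * k) = A :^ h * B :^ k.
Proof.
move=> sAH sBK hH kK; rewrite conjsMg !conjsgM (normsP (subK_normH sBK) h hH).
by rewrite (normsP (subH_normK _) k kK) // -(conjGid hH) conjSg.
Qed.

Lemma dprod_mulgIl (A B : {group gT}) : A \subset H -> B \subset K -> A * B :&: H = A.
Proof.
move=> sAH sBK; rewrite -group_modl //.
have -> : B :&: H = 1 by apply/trivgP; rewrite -tiHK setIC setSI.
by rewrite mulg1.
Qed.

Lemma dprod_mulgIr (A B : {group gT}) : A \subset H -> B \subset K -> A * B :&: K = B.
Proof.
move=> sAH sBK; rewrite setIC -group_modr //.
have -> : K :&: A = 1 by apply/trivgP; rewrite -tiHK setIC setIS.
by rewrite mul1g.
Qed.

Lemma dprod_mulg_group (A B : {group gT}) :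
  A \subset H -> B \subset K -> group_set (A * B).
Proof.
move=> sAH sBK; apply/comm_group_setP; apply: normC.
by rewrite (subset_trans sAH) ?subK_normH.
Qed.

Lemma dprod_subnorm (A B : {group gT}) : A \subset H -> B \subset K ->
  'N_G(A * B) = 'N_H(A) * 'N_K(B).
Proof.
move=> sAH sBK; apply/eqP; rewrite eqEsubset; apply/andP; split; last first.
  by apply/mul_subG; rewrite subsetI normsM ?subsetIr ?subIset ?sHG ?sKG
    ?subK_normH ?subH_normK.
apply/subsetP => g /setIP[]; rewrite -mulHK => /mulsgP[h k hH kK ->] /normP.
rewrite dprod_conjsM // => eAB.
have sAhH : A :^ h \subset H by rewrite -(conjGid hH) conjSg.
have sBkK : B :^ k \subset K by rewrite -(conjGid kK) conjSg.
have eA : A :^ h = A.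
  by rewrite -(dprod_mulgIl sAhH sBkK) eAB dprod_mulgIl.
have eB : B :^ k = B.
  by rewrite -(dprod_mulgIr sAhH sBkK) eAB dprod_mulgIr.
by rewrite mem_mulg // inE ?hH ?kK; apply/normP.
Qed.

Lemma dprod_selfnorm (A B : {group gT}) : A \subset H -> B \subset K ->
  ('N_G(A * B) == A * B) = ('N_H(A) == A) && ('N_K(B) == B).
Proof.
move=> sAH sBK; rewrite dprod_subnorm //.
apply/eqP/andP => [eNAB | [/eqP-> /eqP->] //]; split; apply/eqP.
- by rewrite -(dprod_mulgIl (subsetIl H 'N(A)) (subsetIl K 'N(B))) eNAB dprod_mulgIl.
- by rewrite -(dprod_mulgIr (subsetIl H 'N(A)) (subsetIl K 'N(B))) eNAB dprod_mulgIr.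
Qed.

Lemma dprod_classes A B : A \subset H -> B \subset K ->
  (A * B) :^: G = mul_classes (A :^: H) (B :^: K).
Proof.
move=> sAH sBK; apply/setP => C; apply/imsetP/imset2P.
- case=> g; rewrite -mulHK => /mulsgP[h k hH kK ->] ->.
  by rewrite dprod_conjsM //; exists (A :^ h) (B :^ k); rewrite ?imset_f.
- case=> _ _ /imsetP[h hH ->] /imsetP[k kK ->] ->.
  by exists (h * k); rewrite ?dprod_conjsM // -mulHK mem_mulg.
Qed.

Lemma dprod_cycle_setI x y :
  x \in H -> y \in K -> #[x] = #[y] -> <[x * y]> :&: H = 1.
Proof.
move=> xH yK oxy; apply/trivgP/subsetP => _ /setIP[/cycleP[i ->]].
have cxy : commute x y by apply: (centsP cHK).
rewrite expgMn // (groupMl _ (groupX i xH)) => yiH.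
have yi1 : y ^+ i = 1 by apply/set1gP; rewrite -tiHK inE yiH groupX.
by rewrite inE yi1 mulg1 -order_dvdn oxy order_dvdn yi1.
Qed.

Lemma coprime_dprod_split (Y : {group gT}) : coprime #|H| #|K| -> Y \subset G ->
  (Y :&: H) * (Y :&: K) = Y.
Proof.
move=> coHK sYG; apply/eqP; rewrite eqEsubset mul_subG ?subsetIl //=.
apply/subsetP => y Yy; have := subsetP sYG y Yy; rewrite -mulHK.
case/mulsgP=> h k hH kK def_y; set pi := \pi(#|H|).
have pi_h : pi.-elt h := mem_p_elt (pgroup_pi H) hH.
have pi'_k : pi^'.-elt k.
  by apply: mem_p_elt kK; rewrite /pgroup -coprime_pi' ?cardG_gt0.
have cxy : commute h k by apply: (centsP cHK).
have def_h : y.`_pi = h.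
  by rewrite def_y consttM // (constt1P pi'_k) mulg1 constt_p_elt.
have Yh : h \in Y by rewrite -def_h groupX.
have Yk : k \in Y by rewrite -(groupMl _ Yh) -def_y.
by rewrite def_y mem_mulg // inE ?Yh ?Yk.
Qed.

End DirectProductSubgroups.

Section DirectProductClasses.
Variables (gT : finGroupType) (G H K : {group gT}).
Hypotheses (defG : H \x K = G) (ntH : H :!=: 1) (ntK : K :!=: 1).

Let mulHK : H * K = G. Proof. by case/dprodP: defG. Qed.
Let cHK : H \subset 'C(K). Proof. by case/dprodP: defG; rewrite centsC. Qed.
Let tiHK : H :&: K = 1. Proof. by case/dprodP: defG. Qed.
Let sHG : H \subset G. Proof. by rewrite -mulHK mulg_subl. Qed.
Let sKG : K \subset G. Proof. by rewrite -mulHK mulg_subr. Qed.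
Let ntG : G :!=: 1.
Proof. by apply: contra ntH; rewrite -!subG1 => /(subset_trans sHG). Qed.

Lemma mem_dprod_classes (A B : {group gT}) Y : A \subset H -> B \subset K ->
  Y \in (A * B) :^: G ->
  [/\ Y :&: H \in A :^: H, Y :&: K \in B :^: K & (Y :&: H) * (Y :&: K) = Y].
Proof.
move=> sAH sBK; rewrite (dprod_classes defG) //.
case/imset2P=> _ _ /imsetP[h hH ->] /imsetP[k kK ->] ->.
have sAhH : A :^ h \subset H by rewrite -(conjGid hH) conjSg.
have sBkK : B :^ k \subset K by rewrite -(conjGid kK) conjSg.
rewrite (dprod_mulgIl defG sAhH sBkK) (dprod_mulgIr defG sAhH sBkK).
by split; [apply: (mem_orbit 'Js A hH) | apply: (mem_orbit 'Js B kK) |].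
Qed.

Lemma dprod_nsn_ext (A B : {group gT}) :
  (A : {set gT}) \in nsn_ext H -> (B : {set gT}) \in nsn_ext K -> A * B \in nsn_ext G.
Proof.
rewrite !mem_nsn_ext // => /and3P[_ sAH nsnA] /and3P[_ sBK nsnB].
rewrite (dprod_mulg_group defG) // -mulHK mulgSS //= mulHK.
rewrite (dprod_selfnorm defG) // negb_and.
case/orP: nsnA => [/eqP-> | ->]; last by rewrite !orbT.
case/orP: nsnB => [/eqP-> | ->]; last by rewrite !orbT.
by rewrite mulHK eqxx.
Qed.


Local Notation classes_ext L := (classes_of L (nsn_ext L)).
Local Notation dprod_image :=
  [set mul_classes p.1 p.2 | p in setX (classes_ext H) (classes_ext K)].

Lemma card_dprod_image : #|dprod_image| = (#|classes_ext H| * #|classes_ext K|)%N.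
Proof.
rewrite -cardsX; apply: card_in_imset => -[X Y] -[X' Y'] /setXP[].
move=> /imsetP[A0 /nsn_ext_group[A -> sAH] ->] /imsetP[B0 /nsn_ext_group[B -> sBK] ->].
case/setXP=> /imsetP[A0' /nsn_ext_group[A' -> sA'H] ->].
case/imsetP=> B0' /nsn_ext_group[B' -> sB'K] ->.
rewrite /= -!(dprod_classes defG) // => eqAB.
have /(mem_dprod_classes sA'H sB'K)[] : A * B \in (A' * B') :^: G.
  by rewrite -eqAB; apply: (orbit_refl 'Js).
rewrite (dprod_mulgIl defG) ?(dprod_mulgIr defG) // => AA' BB' _.
by congr (_, _); apply/orbit_eqP.
Qed.

Lemma dprod_image_sub : dprod_image \subset classes_ext G.
Proof.
apply/subsetP => _ /imsetP[[X Y] /setXP[/imsetP[A0 extA ->] /imsetP[B0 extB ->]] ->] /=.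
have [A eA sAH] := nsn_ext_group extA; have [B eB sBK] := nsn_ext_group extB.
rewrite eA eB in extA extB *.
by rewrite -(dprod_classes defG) //; apply: imset_f; apply: dprod_nsn_ext.
Qed.

Lemma classes_ext_dprodP : classes_ext G \subset dprod_image <->
  (forall Y, Y \in nsn_ext G ->
     [/\ Y :&: H \in nsn_ext H, Y :&: K \in nsn_ext K & (Y :&: H) * (Y :&: K) = Y]).
Proof.
split=> [sub Y extY | splitG].
  have /(subsetP sub)/imsetP[[X Z] /setXP[XH XK] /= eYXZ] : Y :^: G \in classes_ext G.
    exact: imset_f.
  case/imsetP: XH eYXZ => A0 extA ->; case/imsetP: XK => B0 extB -> eYAB.
  have [A eA sAH] := nsn_ext_group extA; have [B eB sBK] := nsn_ext_group extB.
  rewrite eA eB in extA extB eYAB; rewrite -(dprod_classes defG) // in eYAB.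
  have : Y \in (A * B) :^: G by rewrite -eYAB; apply: (orbit_refl 'Js).
  case/(mem_dprod_classes sAH sBK) => /imsetP[h hH ->] /imsetP[k kK ->] ->.
  by split; [exact: nsn_extJ ntH hH extA | exact: nsn_extJ ntK kK extB |].
apply/subsetP => _ /imsetP[Y extY ->]; have [extYH extYK defY] := splitG Y extY.
apply/imsetP; exists ((Y :&: H) :^: H, (Y :&: K) :^: K).
  by apply/setXP; split; apply: imset_f.
by rewrite /= -(dprod_classes defG) ?subsetIr // defY.
Qed.

Lemma leq_card_classes_dprod : ((D H + 2) * (D K + 2) <= D G + 2)%N.
Proof.
rewrite -!card_classes_nsn_ext // -card_dprod_image.
exact: subset_leq_card dprod_image_sub.
Qed.

Lemma eq_card_classes_dprod : ((D H + 2) * (D K + 2) = D G + 2)%N <->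
  (forall Y, Y \in nsn_ext G ->
     [/\ Y :&: H \in nsn_ext H, Y :&: K \in nsn_ext K & (Y :&: H) * (Y :&: K) = Y]).
Proof.
rewrite -!card_classes_nsn_ext // -card_dprod_image.
apply: iff_trans classes_ext_dprodP.
have [_ <-] := subset_leqif_card dprod_image_sub.
by split=> [-> | /eqP].
Qed.

Lemma nsn_ext_setI_nilpotent :
  (forall Y, Y \in nsn_ext G -> Y :&: H \in nsn_ext H) -> nilpotent H.
Proof.
move=> extGH; apply/idPn => /non_nilpotent_selfnorm[M ltMH nMM].
have sMH := proper_sub ltMH.
have extM : (M : {set gT}) \in nsn_ext G.
  rewrite mem_nsn_ext // groupP (subset_trans sMH sHG) /=.
  have := dprod_selfnorm defG sMH (sub1G K).
  by rewrite mulg1 nMM eqxx norm1 setIT (negbTE ntK) => ->; rewrite orbT.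
have := extGH M extM; rewrite (setIidPl sMH) mem_nsn_ext // nMM eqxx orbF.
by rewrite (negbTE (proper_neq ltMH)) !andbF.
Qed.

Lemma dprod_split_coprime :
  (forall Y, Y \in nsn_ext G -> (Y :&: H) * (Y :&: K) = Y) -> coprime #|H| #|K|.
Proof.
move=> splitG; apply: contraT => ncoHK.
have gt1_gcd : (1 < gcdn #|H| #|K|)%N.
  by rewrite ltn_neqAle eq_sym ncoHK gcdn_gt0 cardG_gt0.
have p_pr := pdiv_prime gt1_gcd.
have [x Hx ox] := Cauchy p_pr (dvdn_trans (pdiv_dvd _) (dvdn_gcdl _ _)).
have [y Ky oy] := Cauchy p_pr (dvdn_trans (pdiv_dvd _) (dvdn_gcdr _ _)).
have cxy : commute x y by apply: (centsP cHK).
have ntx : x != 1 by apply: contraTneq p_pr => x1; rewrite -ox x1 order1.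
have oxy : #[x] = #[y] by rewrite ox oy.
have YH : <[x * y]> :&: H = 1 := dprod_cycle_setI defG Hx Ky oxy.
have YK : <[x * y]> :&: K = 1.
  have defGC : K \x H = G by rewrite dprodC.
  by rewrite cxy (dprod_cycle_setI defGC Ky Hx).
have extY : <[x * y]> \in nsn_ext G.
  have Gx := subsetP sHG x Hx; have Gy := subsetP sKG y Ky.
  rewrite mem_nsn_ext // groupP cycle_subG groupM //=.
  apply/orP; right; apply: contra_neq ntx => eNY.
  have Nx : x \in 'N_G(<[x * y]>).
    rewrite inE Gx (subsetP (cent_sub _)) // cent_cycle.
    by apply/cent1P; apply: commuteM.
  by apply/set1gP; rewrite -YH inE Hx -eNY Nx.
have /eqP := splitG _ extY; rewrite YH YK mulg1 => /eqP Y1.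
case/negP: ntx; have : x * y \in <[x * y]> := cycle_id _.
rewrite -Y1 inE -eq_invg_mul => /eqP def_y; apply/eqP/set1gP.
by rewrite -tiHK inE Hx -[x]invgK groupV def_y.
Qed.

Lemma nilpotent_coprime_dprod_split Y :
  nilpotent H -> nilpotent K -> coprime #|H| #|K| -> Y \in nsn_ext G ->
  [/\ Y :&: H \in nsn_ext H, Y :&: K \in nsn_ext K & (Y :&: H) * (Y :&: K) = Y].
Proof.
move=> nilH nilK coHK /nsn_ext_group[{}Y -> sYG].
by rewrite !nilpotent_nsn_ext ?subsetIr // (coprime_dprod_split defG).
Qed.

End DirectProductClasses.

Theorem mainTheorem6 (gT : finGroupType) (G H K : {group gT})
  (hdir : H \x K = G) (hH : H :!=: 1) (hK : K :!=: 1) :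
  ((D H + 2) * (D K + 2) - 2 <= D G)%N /\
  (D G = ((D H + 2) * (D K + 2) - 2)%N <->
     [/\ nilpotent H, nilpotent K & coprime #|H| #|K|]).
Proof.
have le_DG := leq_card_classes_dprod hdir hH hK.
have -> : D G = ((D H + 2) * (D K + 2) - 2)%N <-> ((D H + 2) * (D K + 2) = D G + 2)%N.
  by split; lia.
split; first by lia.
rewrite eq_card_classes_dprod //; split=> [splitG | [nilH nilK coHK] Y].
  split.
  - by apply: nsn_ext_setI_nilpotent hdir hH hK _ => Y /splitG[].
  - have hdirC : K \x H = G by rewrite dprodC.
    by apply: nsn_ext_setI_nilpotent hdirC hK hH _ => Y /splitG[].
  - by apply: dprod_split_coprime hdir hH _ => Y /splitG[].
exact: nilpotent_coprime_dprod_split.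
Qed.
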